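(* There is a constant $C$ such that for every two NFAs $A$ and $B$, each with at most $n$ states and over a common alphabet of $m$ input letters, there exist two DFAs $A'$ and $B'$ with at most $C mn$ states and over an alphabet of at most $C mn$ letters such that, for every $r\ge 1$, there is a tower of height $r$ between $L(A)$ and $L(B)$ if and only if there is a tower of height $r$ between $L(A')$ and $L(B')$. In particular, there is an infinite tower between $L(A)$ and $L(B)$ if and only if there is an infinite tower between $L(A')$ and $L(B')$.
   Context: For strings $v=a_1\cdots a_k$ and $w$, $v\preccurlyeq w$ if $w\in\Sigma^*a_1\Sigma^*a_2\Sigma^*\cdots\Sigma^*a_k\Sigma^*$. A sequence $(w_i)_{i=1}^r$ of strings is a tower between languages $K$ and $L$ if $w_1\in K\cup L$ and for all $i=1,\dots,r-1$: $w_i\preccurlyeq w_{i+1}$, $w_i\in K$ implies $w_{i+1}\in L$, and $w_i\in L$ implies $w_{i+1}\in K$; $r$ is its height. An infinite tower is an infinite sequence with the same properties. *)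

From mathcomp Require Import all_boot.
Set Implicit Arguments. Unset Strict Implicit. Unset Printing Implicit Defensive.

Definition lang (Sigma : Type) := seq Sigma -> Prop.

Record nfa (Sigma : finType) := NFA {
  nstate : finType;
  ninit : {set nstate};
  nfinal : {set nstate};
  ntrans : nstate -> Sigma -> {set nstate} }.

Fixpoint nfa_accept_from (Sigma : finType) (A : nfa Sigma) (q : nstate A)
    (w : seq Sigma) : bool :=
  match w with
  | [::] => q \in nfinal A
  | a :: w' => [exists q' in ntrans q a, nfa_accept_from q' w']
  end.

Definition nfa_lang (Sigma : finType) (A : nfa Sigma) : lang Sigma :=
  fun w => exists2 q, q \in ninit A & nfa_accept_from q w.

Record dfa (Sigma : finType) := DFA {
  dstate : finType;
  dinit : dstate;
  dfinal : {set dstate};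
  dtrans : dstate -> Sigma -> dstate }.

Definition dfa_lang (Sigma : finType) (A : dfa Sigma) : lang Sigma :=
  fun w => foldl (@dtrans _ A) (dinit A) w \in dfinal A.

(* Subword (scattered subsequence) order: v ≼ w  is  subseq v w. *)

Definition tower_step (T : eqType) (K L : lang T) (u v : seq T) : Prop :=
  subseq u v /\ (K u -> L v) /\ (L u -> K v).

Definition tower_of_height (T : eqType) (K L : lang T) (r : nat) : Prop :=
  exists w : nat -> seq T,
    (K (w 0) \/ L (w 0)) /\
    forall i, i.+1 < r -> tower_step K L (w i) (w i.+1).

Definition infinite_tower (T : eqType) (K L : lang T) : Prop :=
  exists w : nat -> seq T,
    (K (w 0) \/ L (w 0)) /\ forall i, tower_step K L (w i) (w i.+1).

From mathcomp Require Import all_boot.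
From mathcomp Require Import zify.
From Stdlib Require Import Classical ClassicalEpsilon.
Set Implicit Arguments. Unset Strict Implicit. Unset Printing Implicit Defensive.

(* If L(A) and L(B) meet, a common word is a tower of every height on both
   sides, and two copies of the universal language do the job.  Otherwise
   the new alphabet consists of the old letters together with one marker
   letter for each state of A and of B.  A' accepts the words spelling an
   accepting run of A in which each letter is followed, possibly after some
   unrelated letters, by the marker of the state reached; markers of B are
   ignored (and symmetrically for B').  Erasing the markers maps L(A') onto
   L(A), preserves the subword order, and every word of L(A) lying above the
   projection of x is the projection of a word of L(A') lying above x: the
   missing letters and markers can be inserted around x.  Since the
   languages are disjoint, these two facts let towers move in both
   directions through the projection. *)

Lemma pmap_subseq (U T : eqType) (f : U -> option T) (u v : seq U) :
  subseq u v -> subseq (pmap f u) (pmap f v).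
Proof.
elim: v u => [|y v IH] [|x u] //=; first by rewrite sub0seq.
case: eqP => [<- /IH|_ /IH suv].
  by case: (f x) => [z|] //=; rewrite eqxx.
by case: (f y) => [z|] //=; apply: subseq_trans suv (subseq_cons _ _).
Qed.

(* Finite and infinite towers are both towers indexed by a down-closed [ok]. *)
Definition tower_on (T : eqType) (ok : nat -> Prop) (K L : lang T)
    (w : nat -> seq T) : Prop :=
  (K (w 0) \/ L (w 0)) /\ forall i, ok i.+1 -> tower_step K L (w i) (w i.+1).

Lemma infinite_tower_on (T : eqType) (K L : lang T) :
  infinite_tower K L <-> exists w, tower_on (fun=> True) K L w.
Proof.
by split=> -[w [w0 ws]]; exists w; split=> // i *; apply: ws.
Qed.

Lemma tower_on_mem (T : eqType) (ok : nat -> Prop) (K L : lang T) w :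
  (forall i, ok i.+1 -> ok i) -> tower_on ok K L w ->
  forall i, ok i -> K (w i) \/ L (w i).
Proof.
move=> ok_down [w0 ws]; elim=> [|i IH] // oki.
have [_ [KL LK]] := ws i oki.
by case: (IH (ok_down i oki)) => [/KL|/LK]; tauto.
Qed.

Lemma towers_of_common_word (T : eqType) (K L : lang T) x : K x -> L x ->
  (forall r, tower_of_height K L r) /\ infinite_tower K L.
Proof.
move=> Kx Lx; have step : tower_step K L x x by split; [exact: subseq_refl|].
by split=> [r|]; exists (fun=> x); split=> //; left.
Qed.

Lemma chain_choice (U : Type) (ok : nat -> Prop) (Q : nat -> U -> Prop)
    (R : U -> U -> Prop) :
  (forall i, ok i.+1 -> ok i) -> (exists y, Q 0 y) ->
  (forall i x, ok i.+1 -> Q i x -> exists y, Q i.+1 y /\ R x y) ->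
  exists u : nat -> U,
    Q 0 (u 0) /\ forall i, ok i.+1 -> Q i.+1 (u i.+1) /\ R (u i) (u i.+1).
Proof.
move=> ok_down [y0 Qy0] next; have inh : inhabited U := inhabits y0.
pose fix u i := if i is i'.+1 then epsilon inh (fun y => Q i y /\ R (u i') y)
                else epsilon inh (Q 0).
have Q0 : Q 0 (u 0) := epsilon_spec inh _ (ex_intro _ y0 Qy0).
have step i : ok i.+1 -> Q i (u i) -> Q i.+1 (u i.+1) /\ R (u i) (u i.+1).
  by move=> oki /(next i _ oki); apply: epsilon_spec.
have Qu i : ok i -> Q i (u i).
  by elim: i => [|i IH] // oki; case: (step i oki (IH (ok_down i oki))).
by exists u; split=> // i oki; apply: step oki (Qu i (ok_down i oki)).
Qed.

Section Transfer.
Variables (T U : eqType) (pi : seq U -> seq T).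
Hypothesis pi_subseq : forall u v, subseq u v -> subseq (pi u) (pi v).
Hypothesis pi_nil : pi [::] = [::].
Variables (K L : lang T) (K' L' : lang U).
Hypothesis KL_disjoint : forall w, K w -> L w -> False.
Hypothesis K'_sub : forall u, K' u -> K (pi u).
Hypothesis L'_sub : forall u, L' u -> L (pi u).
Hypothesis K_lift : forall x v, subseq (pi x) v -> K v ->
  exists y, [/\ K' y, subseq x y & pi y = v].
Hypothesis L_lift : forall x v, subseq (pi x) v -> L v ->
  exists y, [/\ L' y, subseq x y & pi y = v].

Lemma lift_member x v : subseq (pi x) v -> K v \/ L v ->
  exists y, [/\ subseq x y, pi y = v, K v -> K' y & L v -> L' y].
Proof.
move=> sxv [Kv|Lv].
- have [y [K'y sxy pyv]] := K_lift sxv Kv.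
  by exists y; split=> // Lv; case: (KL_disjoint Kv Lv).
- have [y [L'y sxy pyv]] := L_lift sxv Lv.
  by exists y; split=> // Kv; case: (KL_disjoint Kv Lv).
Qed.

Section DownClosed.
Variable ok : nat -> Prop.
Hypothesis ok_down : forall i, ok i.+1 -> ok i.

Lemma tower_on_lift w : tower_on ok K L w -> exists u, tower_on ok K' L' u.
Proof.
move=> tw; have [w0 ws] := tw.
pose Q i y := [/\ pi y = w i, K (w i) -> K' y & L (w i) -> L' y].
have [u [Q0 Qs]] : exists u, Q 0 (u 0) /\
    forall i, ok i.+1 -> Q i.+1 (u i.+1) /\ subseq (u i) (u i.+1).
  apply: (chain_choice (Q := Q) (R := @subseq U) ok_down).
    have [|y [_ pyw Ky Ly]] := lift_member (x := [::]) _ w0.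
      by rewrite pi_nil sub0seq.
    by exists y.
  move=> i x oki [pxw _ _]; have [swi _] := ws i oki.
  have [|y [sxy pyw Ky Ly]] := lift_member (x := x) _ (tower_on_mem ok_down tw oki).
    by rewrite pxw.
  by exists y.
have Qu i : ok i -> Q i (u i) by case: i => [|i] // /Qs [].
exists u; split; first by case: Q0 => _ Ku Lu; case: w0 => [/Ku|/Lu]; tauto.
move=> i oki; have [pui _ _] := Qu i (ok_down oki).
have [[_ Ku Lu] sui] := Qs i oki; have [_ [KL LK]] := ws i oki.
split=> //; split.
- by move=> /K'_sub; rewrite pui => /KL /Lu.
- by move=> /L'_sub; rewrite pui => /LK /Ku.
Qed.

Lemma tower_on_project u : tower_on ok K' L' u -> tower_on ok K L (pi \o u).
Proof.
move=> tu; have [u0 us] := tu.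
split; first by case: u0 => [/K'_sub|/L'_sub]; tauto.
move=> i oki; have [sui [KL LK]] := us i oki.
split; first exact: pi_subseq.
split=> /= [Kw|Lw]; case: (tower_on_mem ok_down tu (ok_down oki)).
- by move=> /KL /L'_sub.
- by move=> /L'_sub Lw; case: (KL_disjoint Kw Lw).
- by move=> /K'_sub Kw; case: (KL_disjoint Kw Lw).
- by move=> /LK /K'_sub.
Qed.

Lemma tower_on_transfer :
  (exists w, tower_on ok K L w) <-> (exists u, tower_on ok K' L' u).
Proof.
split=> -[w tw]; first exact: tower_on_lift tw.
by exists (pi \o w); apply: tower_on_project.
Qed.

End DownClosed.

Lemma towers_transfer :
  (forall r, tower_of_height K L r <-> tower_of_height K' L' r) /\
  (infinite_tower K L <-> infinite_tower K' L').
Proof.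
split=> [r|]; first exact: (tower_on_transfer (fun i => @ltnW i.+1 r)).
by rewrite !infinite_tower_on; apply: tower_on_transfer.
Qed.

End Transfer.

Section MarkerDFA.
Variables (Sig G : finType) (A : nfa Sig).
Variables (label : G -> option Sig) (marker : G -> option (nstate A)).
Variables (code : Sig -> G) (mark : nstate A -> G).
Hypothesis label_code : forall a, label (code a) = Some a.
Hypothesis label_mark : forall q, label (mark q) = None.
Hypothesis marker_mark : forall q, marker (mark q) = Some q.

(* [inl true]: no state chosen yet; [inl false]: sink; [inr (inl q)]: in
   state [q]; [inr (inr (q, a))]: in state [q] after reading [a], waiting for
   the marker of a successor.  Letters [g] with [label g = None] and
   [marker g = None] (markers of the other automaton) are ignored. *)
Local Notation state := (bool + (nstate A + nstate A * Sig))%type.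

Definition marker_step (s : state) (g : G) : state :=
  match s with
  | inl true => match label g with Some _ => inl false | None =>
      match marker g with
      | Some q => if q \in ninit A then inr (inl q) else inl false
      | None => inl true end end
  | inl false => inl false
  | inr (inl q) => match label g with
      | Some a => inr (inr (q, a))
      | None => inr (inl q) end
  | inr (inr (q, a)) => match label g with Some _ => inl false | None =>
      match marker g with
      | Some q' => if q' \in ntrans q a then inr (inl q') else inl false
      | None => inr (inr (q, a)) end end
  end.

Definition marker_final : {set state} :=
  [set s | if s is inr (inl q) then q \in nfinal A else false].

Definition marker_dfa : dfa G := DFA (inl true : state) marker_final marker_step.

Lemma card_marker_dfa :
  #|dstate marker_dfa| = 2 + (#|nstate A| + #|nstate A| * #|Sig|).
Proof. by rewrite !card_sum card_bool card_prod. Qed.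

Definition state_lang (s : state) : lang Sig :=
  match s with
  | inl true => nfa_lang A
  | inl false => fun=> False
  | inr (inl q) => nfa_accept_from q
  | inr (inr (q, a)) => fun v => nfa_accept_from q (a :: v)
  end.

Lemma marker_run_sound u s :
  foldl marker_step s u \in marker_final -> state_lang s (pmap label u).
Proof.
elim: u s => [|g u IH] s /=; first by rewrite inE; case: s => [[]|[q|[q a]]].
move/IH; case: s => [[]|[q|[q a]]] /=; case: (label g) => [b|] //=.
- by case: (marker g) => [q|] //; case: ifP => // qi; exists q.
- case: (marker g) => [q'|] //; case: ifP => // qq' acc.
  by apply/existsP; exists q'; rewrite qq'.
Qed.

Lemma marker_dfa_sound u : dfa_lang marker_dfa u -> nfa_lang A (pmap label u).
Proof. exact: marker_run_sound. Qed.

Lemma marker_run_unlabelled q x :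
  pmap label x = [::] -> foldl marker_step (inr (inl q)) x = inr (inl q).
Proof. by elim: x => [|g x IH] //=; case: (label g) => [b|] //= /IH. Qed.

Lemma pmap_label_cons x b t : pmap label x = b :: t ->
  exists x1 g x2, [/\ x = x1 ++ g :: x2, pmap label x1 = [::],
                      label g = Some b & pmap label x2 = t].
Proof.
elim: x => [|g x IH] //=; case lg: (label g) => [c|] /=.
  by case=> <- <-; exists [::], g, x.
move=> /IH [x1 [g' [x2 [-> x1_nil lg' x2_t]]]].
by exists (g :: x1), g', x2; rewrite /= lg.
Qed.

(* A letter of [w] missing from [pmap label x] is inserted as [code a]
   followed by the marker of the next state; a letter already present
   in [x] only needs the marker to be inserted after it. *)
Lemma marker_run_lift w q x :
  nfa_accept_from q w -> subseq (pmap label x) w ->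
  exists y, [/\ subseq x y, pmap label y = w &
                foldl marker_step (inr (inl q)) y \in marker_final].
Proof.
elim: w q x => [|a w IH] q x /=.
  move=> qf /eqP x_nil.
  by exists x; rewrite marker_run_unlabelled // inE.
case/existsP=> q' /andP[qq' acc] sxw.
have insert_letter : subseq (pmap label x) w -> exists y, [/\ subseq x y,
    pmap label y = a :: w & foldl marker_step (inr (inl q)) y \in marker_final].
  move=> {}sxw; have [y [sxy <- fin_y]] := IH q' x acc sxw.
  exists (code a :: mark q' :: y); split.
  - by apply: subseq_trans sxy _; apply: subseq_trans (subseq_cons _ _) _;
      apply: subseq_cons.
  - by rewrite /= label_code label_mark.
  - by rewrite /= label_code /= label_mark marker_mark qq'.
move: sxw; case ex: (pmap label x) => [|b t] /=.
  by move=> _; apply: insert_letter; rewrite ex sub0seq.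
case: eqP => [ba stw|_ sxw]; last by apply: insert_letter; rewrite ex.
subst b; have [x1 [g [x2 [-> x1_nil lg x2_t]]]] := pmap_label_cons ex.
have [|y2 [sx2y2 <- fin_y2]] := IH q' x2 acc; first by rewrite x2_t.
exists (x1 ++ g :: mark q' :: y2); split.
- rewrite cat_subseq //= eqxx; exact: subseq_trans sx2y2 (subseq_cons _ _).
- by rewrite pmap_cat x1_nil /= lg label_mark.
- by rewrite foldl_cat marker_run_unlabelled //= lg /= label_mark marker_mark qq'.
Qed.

Lemma marker_dfa_lift x w : subseq (pmap label x) w -> nfa_lang A w ->
  exists y, [/\ dfa_lang marker_dfa y, subseq x y & pmap label y = w].
Proof.
move=> sxw [q0 q0i acc]; have [y [sxy <- fin_y]] := marker_run_lift acc sxw.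
exists (mark q0 :: y); split.
- by rewrite /dfa_lang /= label_mark marker_mark q0i.
- exact: subseq_trans sxy (subseq_cons _ _).
- by rewrite /= label_mark.
Qed.

End MarkerDFA.

Section Tagging.
Variables (Sig : finType) (A B : nfa Sig).

Definition tag : finType := (Sig + (nstate A + nstate B))%type.
Local Notation G := 'I_#|tag|.

Definition tag_label (g : G) : option Sig :=
  if enum_val g is inl a then Some a else None.
Definition tag_markerA (g : G) : option (nstate A) :=
  if enum_val g is inr (inl q) then Some q else None.
Definition tag_markerB (g : G) : option (nstate B) :=
  if enum_val g is inr (inr q) then Some q else None.

Lemma tagged_towers : (forall w, nfa_lang A w -> nfa_lang B w -> False) ->
  let A' := marker_dfa tag_label tag_markerA in
  let B' := marker_dfa tag_label tag_markerB in
  (forall r, tower_of_height (nfa_lang A) (nfa_lang B) r <->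
             tower_of_height (dfa_lang A') (dfa_lang B') r) /\
  (infinite_tower (nfa_lang A) (nfa_lang B) <->
   infinite_tower (dfa_lang A') (dfa_lang B')).
Proof.
move=> disj A' B'.
pose code a : G := enum_rank (inl a : tag).
pose markA q : G := enum_rank (inr (inl q) : tag).
pose markB q : G := enum_rank (inr (inr q) : tag).
have label_code a : tag_label (code a) = Some a by rewrite /tag_label enum_rankK.
have label_markA q : tag_label (markA q) = None by rewrite /tag_label enum_rankK.
have label_markB q : tag_label (markB q) = None by rewrite /tag_label enum_rankK.
have markerA q : tag_markerA (markA q) = Some q by rewrite /tag_markerA enum_rankK.
have markerB q : tag_markerB (markB q) = Some q by rewrite /tag_markerB enum_rankK.
apply: (towers_transfer (@pmap_subseq _ _ tag_label) (erefl _) disj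
  (@marker_dfa_sound _ _ _ _ _) (@marker_dfa_sound _ _ _ _ _)) => x w sxw.
- exact: (marker_dfa_lift label_code label_markA markerA sxw).
- exact: (marker_dfa_lift label_code label_markB markerB sxw).
Qed.

End Tagging.

Definition full_dfa (Sig : finType) : dfa Sig := DFA tt [set: unit] (fun _ _ => tt).

Lemma full_dfa_lang (Sig : finType) (w : seq Sig) : dfa_lang (full_dfa Sig) w.
Proof. by rewrite /dfa_lang inE. Qed.

Theorem theorem12 :
  exists C : nat,
    forall (n m : nat), 0 < n -> 0 < m ->
    forall (A B : nfa 'I_m),
      #|nstate A| <= n -> #|nstate B| <= n ->
      exists (k : nat) (A' B' : dfa 'I_k),
        [/\ k <= C * m * n,
            #|dstate A'| <= C * m * n,
            #|dstate B'| <= C * m * n,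
            (forall r, 0 < r ->
               (tower_of_height (nfa_lang A) (nfa_lang B) r <->
                tower_of_height (dfa_lang A') (dfa_lang B') r))
          & (infinite_tower (nfa_lang A) (nfa_lang B) <->
             infinite_tower (dfa_lang A') (dfa_lang B'))].
Proof.
exists 4 => n m n_gt0 m_gt0 A B hA hB.
have [[w [wA wB]]|disj] := classic (exists w, nfa_lang A w /\ nfa_lang B w).
  have [towA infA] := towers_of_common_word wA wB.
  have [towF infF] := towers_of_common_word (@full_dfa_lang 'I_1 [::])
                                            (@full_dfa_lang 'I_1 [::]).
  by exists 1, (full_dfa _), (full_dfa _); rewrite card_unit; split=> //; lia.
have [tow inf] := tagged_towers (fun w a b => disj (ex_intro _ w (conj a b))).
have hmA : #|nstate A| * m <= n * m := leq_mul hA (leqnn m).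
have hmB : #|nstate B| * m <= n * m := leq_mul hB (leqnn m).
exists #|tag A B|, (marker_dfa (@tag_label _ A B) (@tag_markerA _ A B)),
  (marker_dfa (@tag_label _ A B) (@tag_markerB _ A B)).
split=> //; rewrite ?card_marker_dfa ?card_sum card_ord; nia.
Qed.
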